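(* Let $\mathbb{X}$ be a finite-dimensional smooth real Banach space (of dimension at least $2$). Then there exist $x,y\in S_{\mathbb{X}}$ with $y\neq\pm x$ such that $(x,y)$ is a weak CPP.
   Context: $S_{\mathbb{X}}$ is the unit sphere; $B(x,r)=\{u:\|u-x\|<r\}$. $x\perp_B y$ means $\|x+\lambda y\|\ge\|x\|$ for all real $\lambda$; $x^\perp=\{y:x\perp_B y\}$. For $x,y\in S_{\mathbb{X}}$, $(x,y)$ is a weak CPP if there exist $z\in x^\perp\cap S_{\mathbb{X}}$, $w\in y^\perp\cap S_{\mathbb{X}}$, $r>0$, $\mu>0$ such that for all $a,b\in\mathbb{R}$, $ax+bz\in B(x,r)\cap S_{\mathbb{X}}$ implies $\|ay+b\mu w\|\le1$. *)

From HB Require Import structures.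
From mathcomp Require Import all_boot all_order all_algebra.
From mathcomp Require Import all_classical all_reals all_analysis.
Set Implicit Arguments. Unset Strict Implicit. Unset Printing Implicit Defensive.
Import Order.TTheory GRing.Theory Num.Theory.
Import numFieldNormedType.Exports.
Local Open Scope ring_scope.

Section Defs.
Variables (R : realType) (V : normedModType R).

Definition BJ_orth (x y : V) : Prop := forall l : R, `|x| <= `|x + l *: y|.

Definition unit_sphere : set V := [set x | `|x| = 1].

Definition open_ball (x : V) (r : R) : set V := [set u | `|u - x| < r].

(* (x,y) is a weak CPP (x, y assumed on the unit sphere by the caller) *)
Definition weak_CPP (x y : V) : Prop :=
  exists (z w : V) (r mu : R),
    [/\ BJ_orth x z /\ unit_sphere z, BJ_orth y w /\ unit_sphere w,
        0 < r, 0 < mu &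
        forall a b : R, open_ball x r (a *: x + b *: z) ->
          unit_sphere (a *: x + b *: z) ->
          `|a *: y + b *: (mu *: w)| <= 1].

Definition supporting_functional (x : V) (f : V -> R) : Prop :=
  [/\ forall u v, f (u + v) = f u + f v,
      forall (a : R) u, f (a *: u) = a * f u,
      forall u, `|f u| <= `|u| & f x = 1].

Definition smooth : Prop :=
  forall x : V, `|x| = 1 -> forall f g : V -> R,
    supporting_functional x f -> supporting_functional x g -> f = g.

Definition has_dim (n : nat) : Prop :=
  exists e : 'I_n -> V,
    (forall v : V, exists c : 'I_n -> R, v = \sum_(i < n) c i *: e i) /\
    (forall c : 'I_n -> R, \sum_(i < n) c i *: e i = 0 -> forall i, c i = 0).

End Defs.

(* Fix two independent vectors u, v and compare the norm on their span with the
   Euclidean norm of coordinates. By compactness there are optimal constants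
   m <= M with m |c|^2 <= |c1 u + c2 v|^2 <= M |c|^2, attained at unit vectors x
   (for m) and y (for M). Turning coordinates by a right angle gives z and w such
   that, in the frame (x, z), the unit ball lies inside a Euclidean disc touching
   it at x, while in the frame (y, w) it contains a Euclidean disc touching it at
   y. Sending one frame to the other (w suitably rescaled) therefore maps unit
   vectors into the ball, and the tangency makes x _|_B z and y _|_B w. If m = M
   the plane is Euclidean and y can be taken to be x turned by a right angle;
   otherwise y <> +-x because the two constants differ. *)

From HB Require Import structures.
From mathcomp Require Import all_boot all_order all_algebra.
From mathcomp Require Import all_classical all_reals all_analysis.
From mathcomp Require Import ring lra.
Import Order.TTheory GRing.Theory Num.Theory.
Import numFieldNormedType.Exports.
Local Open Scope ring_scope.

Section BirkhoffJames.
Context {R : realType} {V : normedModType R}.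

Lemma BJ_orthZ (x y : V) (k : R) : BJ_orth x y -> BJ_orth x (k *: y).
Proof. by move=> xy l; rewrite scalerA. Qed.

Lemma sqr_ge1 (a : R) : 0 <= a -> 1 <= a ^+ 2 -> 1 <= a.
Proof. by move=> a0; rewrite -[X in X <= _](expr1n _ 2) ler_pXn2r ?nnegrE. Qed.

Lemma BJ_orth_of_sqr_norm_le (y w : V) :
  `|y| = 1 -> (forall t, `|y + t *: w| ^+ 2 <= 1 + t ^+ 2) -> BJ_orth y w.
Proof.
move=> y1 yw l; rewrite y1 leNgt; apply/negP.
set N := `|y + l *: w| => N_lt1.
have N_ge0 : 0 <= N := normr_ge0 _.
have l2_gt0 : 0 < 1 + l ^+ 2 by rewrite ltr_pwDl ?sqr_ge0.
set s := (1 - N) / (1 + l ^+ 2).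
have s_def : s * (1 + l ^+ 2) = 1 - N by rewrite /s divfK ?gt_eqF.
have s_gt0 : 0 < s by rewrite /s divr_gt0 // subr_gt0.
have s_le1 : s <= 1 by nra.
(* Convexity of the norm along the line drags y + s l w below 1 - s (1 - N); the
   triangle inequality then lifts y - s l w above 1 + s (1 - N), which the
   quadratic bound 1 + (s l)^2 forbids for small s. *)
have below : `|y + (s * l) *: w| <= 1 - s + s * N.
  have -> : y + (s * l) *: w = (1 - s) *: y + s *: (y + l *: w).
    by rewrite scalerDr scalerA scalerBl scale1r addrA subrK.
  apply: le_trans (ler_normD _ _) _.
  rewrite (normrZ (1 - s)) (normrZ s) y1 -/N.
  by rewrite !ger0_norm ?subr_ge0 ?(ltW s_gt0) // mulr1.
have above : 1 + s - s * N <= `|y - (s * l) *: w|.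
  have : `|y + y| <= `|y + (s * l) *: w| + `|y - (s * l) *: w|.
    by apply: le_trans (ler_normD _ _); rewrite addrACA subrr addr0.
  by rewrite -mulr2n normrMn y1; lra.
have := yw (- (s * l)); rewrite scaleNr sqrrN.
have : (1 + s - s * N) ^+ 2 <= `|y - (s * l) *: w| ^+ 2.
  by rewrite ler_pXn2r ?nnegrE //; nra.
nra.
Qed.

Lemma weak_CPP_of_ellipses (x z y w : V) :
  `|x| = 1 -> `|y| = 1 -> w != 0 ->
  (forall a b, a ^+ 2 + b ^+ 2 <= `|a *: x + b *: z| ^+ 2) ->
  (forall a b, `|a *: y + b *: w| ^+ 2 <= a ^+ 2 + b ^+ 2) ->
  weak_CPP x y.
Proof.
move=> x1 y1 w0 xz yw.
have z0 : z != 0.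
  apply/eqP=> z0; have := xz 0 1; rewrite z0 scale0r scaler0 addr0 normr0; lra.
have nz_gt0 : 0 < `|z| by rewrite normr_gt0.
have nw_gt0 : 0 < `|w| by rewrite normr_gt0.
exists (`|z|^-1 *: z), (`|w|^-1 *: w), 1, (`|w| / `|z|); split.
- split; last exact: normfZV.
  apply: BJ_orthZ => l; rewrite x1; apply: sqr_ge1 => //.
  by have := xz 1 l; rewrite scale1r; nra.
- split; last exact: normfZV.
  apply/BJ_orthZ/BJ_orth_of_sqr_norm_le => // t.
  by have := yw 1 t; rewrite scale1r expr1n.
- exact: ltr01.
- by rewrite divr_gt0.
move=> a b _ ab1; rewrite /unit_sphere /= in ab1.
rewrite -(expr_le1 (_ : (0 < 2)%N)) //.
have -> : b *: ((`|w| / `|z|) *: (`|w|^-1 *: w)) = (b / `|z|) *: w.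
  by rewrite !scalerA; congr (_ *: _); field; rewrite !gt_eqF.
apply: le_trans (yw _ _) _.
by rewrite -(expr1n _ 2) -ab1 scalerA; apply: xz.
Qed.

End BirkhoffJames.

Section HomogeneousQuadratic.
Context {R : realType}.

Definition homogeneous2 (N : R -> R -> R) :=
  forall k p q, N (k * p) (k * q) = k ^+ 2 * N p q.

Lemma homogeneous2_swap (N : R -> R -> R) :
  homogeneous2 N -> homogeneous2 (fun p q => N q p).
Proof. by move=> hom k p q; apply: hom. Qed.

Lemma homogeneous2_ge (N : R -> R -> R) (c : R) : homogeneous2 N ->
  (forall s : R, -1 <= s <= 1 ->
     c * (1 + s ^+ 2) <= N 1 s /\ c * (1 + s ^+ 2) <= N s 1) ->
  forall p q : R, c * (p ^+ 2 + q ^+ 2) <= N p q.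
Proof.
move=> hom hc p q; wlog qp : N hom hc p q / `|q| <= `|p|.
  move=> wlog; case: (lerP `|q| `|p|) => [|/ltW pq]; first exact: wlog.
  by rewrite addrC; apply: (wlog (fun p q => N q p)) => // s /hc[]; split.
have [p0|p0] := eqVneq p 0.
  move: qp; rewrite p0 normr0 normr_le0 => /eqP ->.
  have := hom 0 0 0; rewrite !mul0r expr2 !mul0r => ->.
  by rewrite addr0 mulr0.
have s1 : -1 <= q / p <= 1.
  by rewrite -ler_norml normrM normfV ler_pdivrMr ?normr_gt0 ?mul1r.
have -> : N p q = p ^+ 2 * N 1 (q / p) by rewrite -hom mulr1 mulrC divfK.
have [hc1 _] := hc _ s1.
have -> : p ^+ 2 + q ^+ 2 = p ^+ 2 * (1 + (q / p) ^+ 2) by field.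
by rewrite mulrCA ler_wpM2l ?sqr_ge0.
Qed.

Lemma continuous_div_1_add_sqr (f : R -> R) :
  continuous f -> continuous (fun t => f t / (1 + t ^+ 2)).
Proof.
move=> cf t; apply: (@continuousM _ _ f (fun t => (1 + t ^+ 2)^-1)); first exact: cf.
apply: continuousV; first by rewrite gt_eqF // ltr_pwDl ?sqr_ge0.
apply: continuousD; first exact: cvg_cst.
exact: exprn_continuous.
Qed.

(* The charts t |-> (1, t) and t |-> (t, 1), t in [-1, 1], meet every line
   through the origin, so two applications of the extreme value theorem suffice. *)
Lemma homogeneous2_min (N : R -> R -> R) : homogeneous2 N ->
  continuous (N 1) -> continuous (N ^~ 1) ->
  exists m : R, (forall p q : R, m * (p ^+ 2 + q ^+ 2) <= N p q) /\
    exists p q : R, 0 < p ^+ 2 + q ^+ 2 /\ N p q = m * (p ^+ 2 + q ^+ 2).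
Proof.
move=> hom c1 c2.
have m1 : (-1 : R) <= 1 by lra.
have [t1 t1I t1min] := EVT_min m1
  (continuous_subspaceT (continuous_div_1_add_sqr _ c1)).
have [t2 t2I t2min] := EVT_min m1
  (continuous_subspaceT (continuous_div_1_add_sqr _ c2)).
wlog le12 : N hom c1 c2 t1 t2 t1I t2I t1min t2min /
    N 1 t1 / (1 + t1 ^+ 2) <= N t2 1 / (1 + t2 ^+ 2).
  move=> wlog; case: (lerP (N 1 t1 / (1 + t1 ^+ 2)) (N t2 1 / (1 + t2 ^+ 2))).
    exact: wlog.
  move=> /ltW lt21.
  have [m [mN [p [q [pq0 Npq]]]]] := wlog _ (homogeneous2_swap _ hom) c2 c1 _ _
    t2I t1I t2min t1min lt21.
  exists m; split; first by move=> p' q'; rewrite addrC.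
  by exists q, p; rewrite addrC.
have pos (s : R) : 0 < 1 + s ^+ 2 by rewrite ltr_pwDl ?sqr_ge0.
exists (N 1 t1 / (1 + t1 ^+ 2)); split.
  apply: homogeneous2_ge => // s sI.
  have sI' : s \in `[-1, 1]%R by rewrite in_itv.
  by rewrite -!(ler_pdivlMr _ _ (pos s)) (le_trans le12 (t2min _ sI')) t1min.
by exists 1, t1; rewrite expr1n divfK ?gt_eqF.
Qed.

End HomogeneousQuadratic.

Section Plane.
Context {R : realType} {V : normedModType R}.

Lemma continuous_sqr_norm_line (a b : V) :
  continuous (fun t : R => `|t *: a + b| ^+ 2).
Proof.
move=> t.
apply: (@continuous_comp _ _ _ (fun t : R => `|t *: a + b|) (fun x : R => x ^+ 2)).
  apply: (@continuous_comp _ _ _ (fun t : R => t *: a + b) (@Num.norm _ V)).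
    by apply: continuousD; [exact: continuousZr_tmp | exact: cvg_cst].
  exact: norm_continuous.
exact: exprn_continuous.
Qed.

Variables u v : V.
Hypothesis uv_free : forall p q : R, p *: u + q *: v = 0 -> p = 0 /\ q = 0.
Local Notation comb p q := (p *: u + q *: v).

Lemma comb_lin (a b p q p' q' : R) :
  a *: comb p q + b *: comb p' q' = comb (a * p + b * p') (a * q + b * q').
Proof. by rewrite !scalerDr !scalerA !scalerDl addrACA. Qed.

Lemma comb_inj (p q p' q' : R) : comb p q = comb p' q' -> p = p' /\ q = q'.
Proof.
move=> /eqP; rewrite -subr_eq0 opprD addrACA -!scaleNr -!scalerDl.
by move=> /eqP /uv_free [/eqP + /eqP]; rewrite !subr_eq0 => /eqP -> /eqP ->.
Qed.

Lemma homogeneous2_sqr_norm_comb : homogeneous2 (fun p q : R => `|comb p q| ^+ 2).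
Proof.
by move=> k p q /=; rewrite -!scalerA -scalerDr normrZ exprMn real_normK ?num_real.
Qed.

Lemma comb_normalize (c p q : R) : 0 < p ^+ 2 + q ^+ 2 ->
  `|comb p q| ^+ 2 = c * (p ^+ 2 + q ^+ 2) ->
  exists p' q' : R, `|comb p' q'| = 1 /\ c * (p' ^+ 2 + q' ^+ 2) = 1.
Proof.
move=> pq_gt0 cpq.
have pq0 : comb p q != 0.
  by apply/eqP => /uv_free[p0 q0]; move: pq_gt0; rewrite p0 q0 expr2 mul0r addr0 ltxx.
exists (`|comb p q|^-1 * p), (`|comb p q|^-1 * q); split.
  by rewrite -!scalerA -scalerDr normfZV.
rewrite !exprMn -mulrDr mulrCA -cpq exprVn mulVf //.
by rewrite expf_neq0 // normr_eq0.
Qed.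

Lemma comb_sqr_norm_extrema : exists m M : R,
  [/\ forall p q : R, m * (p ^+ 2 + q ^+ 2) <= `|comb p q| ^+ 2,
      forall p q : R, `|comb p q| ^+ 2 <= M * (p ^+ 2 + q ^+ 2),
      exists p q : R, `|comb p q| = 1 /\ m * (p ^+ 2 + q ^+ 2) = 1 &
      exists p q : R, `|comb p q| = 1 /\ M * (p ^+ 2 + q ^+ 2) = 1].
Proof.
pose N p q := `|comb p q| ^+ 2.
have hom : homogeneous2 N := homogeneous2_sqr_norm_comb.
have homN : homogeneous2 (fun p q => - N p q) by move=> k p q; rewrite hom mulrN.
have c1 : continuous (N 1).
  have -> : N 1 = (fun t => `|t *: v + 1 *: u| ^+ 2).
    by apply/funext => t; rewrite /N addrC.
  exact: continuous_sqr_norm_line.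
have c2 : continuous (N ^~ 1) := continuous_sqr_norm_line u (1 *: v).
have [m [mN [p0 [q0 [pq0 Npq0]]]]] := homogeneous2_min _ hom c1 c2.
have [M [MN [p1 [q1 [pq1 Npq1]]]]] := homogeneous2_min _ homN
  (fun t => continuousN (c1 t)) (fun t => continuousN (c2 t)).
exists m, (- M); split => //.
- by move=> p q; rewrite mulNr lerNr; apply: MN.
- exact: comb_normalize pq0 Npq0.
- by apply: comb_normalize pq1 _; rewrite mulNr -Npq1 opprK.
Qed.

Section Extremal.
Variables m M : R.
Hypothesis comb_ge : forall p q : R, m * (p ^+ 2 + q ^+ 2) <= `|comb p q| ^+ 2.
Hypothesis comb_le : forall p q : R, `|comb p q| ^+ 2 <= M * (p ^+ 2 + q ^+ 2).

Lemma weak_CPP_comb (p0 q0 p1 q1 : R) :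
  `|comb p0 q0| = 1 -> m * (p0 ^+ 2 + q0 ^+ 2) = 1 ->
  `|comb p1 q1| = 1 -> M * (p1 ^+ 2 + q1 ^+ 2) = 1 ->
  weak_CPP (comb p0 q0) (comb p1 q1).
Proof.
move=> x1 mx y1 My.
have sqr_rot (a b p q : R) : (a * p + b * - q) ^+ 2 + (a * q + b * p) ^+ 2 =
    (a ^+ 2 + b ^+ 2) * (p ^+ 2 + q ^+ 2) by ring.
apply: (weak_CPP_of_ellipses _ (comb (- q0) p0) _ (comb (- q1) p1)) => //.
- by apply/eqP => /uv_free[q10 p10]; move: My; rewrite p10 -[q1]opprK q10; nra.
- move=> a b; rewrite comb_lin; apply: le_trans (comb_ge _ _).
  by rewrite sqr_rot mulrCA mx mulr1.
- move=> a b; rewrite comb_lin; apply: le_trans (comb_le _ _) _.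
  by rewrite sqr_rot mulrCA My mulr1.
Qed.

End Extremal.

Lemma exists_weak_CPP_pair :
  exists x y : V, [/\ `|x| = 1, `|y| = 1, y <> x, y <> - x & weak_CPP x y].
Proof.
have [m [M [ge le [p0 [q0 [x1 mx]]] [p1 [q1 [y1 My]]]]]] := comb_sqr_norm_extrema.
have [p2 [q2 [y1' My' yx yNx]]] : exists p2 q2 : R,
    [/\ `|comb p2 q2| = 1, M * (p2 ^+ 2 + q2 ^+ 2) = 1,
        (p2, q2) <> (p0, q0) & (p2, q2) <> (- p0, - q0)].
  have pq0 : p0 ^+ 2 + q0 ^+ 2 != 0.
    by apply: contra_eq_neq mx => ->; rewrite mulr0 eq_sym oner_neq0.
  have [mM|mM] := eqVneq m M.
    exists (- q0), p0; split.
    - have sq0 : m * ((- q0) ^+ 2 + p0 ^+ 2) = 1 by rewrite sqrrN addrC.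
      have := ge (- q0) p0; have := le (- q0) p0; rewrite -mM sq0 => h1 h2.
      by apply/eqP; rewrite -normr_id -sqr_norm_eq1 eq_le h1 h2.
    - by rewrite -mM sqrrN addrC.
    - by case=> e1 e2; move/eqP: pq0; apply; nra.
    - by case=> e1 e2; move/eqP: pq0; apply; nra.
  exists p1, q1; split => // -[e1 e2]; move/eqP: mM; apply; apply: (mulIf pq0);
    by rewrite mx -My e1 e2 ?sqrrN.
exists (comb p0 q0), (comb p2 q2); split => //.
- by move/comb_inj => [e1 e2]; apply: yx; rewrite e1 e2.
- by rewrite opprD -!scaleNr => /comb_inj [e1 e2]; apply: yNx; rewrite e1 e2.
- exact: (weak_CPP_comb _ _ ge le).
Qed.

End Plane.

Lemma has_dim_free_pair {R : realType} {V : normedModType R} {n : nat} :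
  (2 <= n)%N -> has_dim V n ->
  exists u v : V, forall p q : R, p *: u + q *: v = 0 -> p = 0 /\ q = 0.
Proof.
move=> n2 [e [_ e_free]].
pose i0 : 'I_n := Ordinal (leqW n2 : (0 < n)%N).
pose i1 : 'I_n := Ordinal (n2 : (1 < n)%N).
have i10 : i1 != i0 by [].
exists (e i0), (e i1) => p q pq0.
pose c i := if i == i0 then p else if i == i1 then q else 0.
have c0 : \sum_(i < n) c i *: e i = 0.
  rewrite (bigD1 i0) //= (bigD1 i1) //= big1 => [|i /andP[ni0 ni1]].
    by rewrite /c eqxx (negbTE i10) eqxx addr0.
  by rewrite /c (negbTE ni0) (negbTE ni1) scale0r.
by split; [have := e_free c c0 i0 | have := e_free c c0 i1];
  rewrite /c eqxx ?(negbTE i10).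
Qed.

Theorem mainTheorem3 (R : realType) (V : completeNormedModType R) (n : nat)
  (hn : (2 <= n)%N) (hdim : has_dim V n) (hsmooth : smooth V) :
  exists x y : V, [/\ `|x| = 1, `|y| = 1, y <> x, y <> - x & weak_CPP x y].
Proof.
have [u [v uv_free]] := has_dim_free_pair hn hdim.
exact: exists_weak_CPP_pair uv_free.
Qed.
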